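(* Let $\mathcal{C}$ be a clutter whose vertex set is a subset of $\{x_1,\dots,x_n\}$, $S=\mathbb{K}[x_1,\dots,x_n]$ with $\mathbb{K}$ a field, and let $e_1$ be an edge of $\mathcal{C}$ such that $\{e_1\}$ is a 2-collage for $\mathcal{C}$. Then $\operatorname{sreg}(S/I(\mathcal{C}))\le |e_1|-1$.
   Context: A clutter $\mathcal{C}$ consists of a finite vertex set and a collection $E(\mathcal{C})$ of subsets (edges), no edge containing another; vertices are identified with variables and $I(\mathcal{C})=(\prod_{x\in e}x : e\in E(\mathcal{C}))$ is the edge ideal. A 2-collage for $\mathcal{C}$ is a subset $C\subseteq E(\mathcal{C})$ such that for each $e\in E(\mathcal{C})$ there is a vertex $v$ with $e\setminus\{v\}$ contained in some edge of $C$. Stanley regularity: for a squarefree monomial ideal $I\subset S$, a squarefree Stanley decomposition of $S/I$ is a decomposition $S/I=\bigoplus_{i=1}^r u_i\mathbb{K}[Z_i]$ as $\mathbb{K}$-vector spaces, where $Z_i\subseteq\{x_1,\dots,x_n\}$, $u_i$ are (images of) squarefree monomials with $\operatorname{supp}(u_i)\subseteq Z_i$, and each $u_i\mathbb{K}[Z_i]$ is free over $\mathbb{K}[Z_i]$. Its Stanley regularity is $\max_i\deg(u_i)$, and $\operatorname{sreg}(S/I)$ is the minimum over all such decompositions. *)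

From HB Require Import structures.
From mathcomp Require Import all_boot all_order all_algebra.
From mathcomp Require Import mpoly.
Set Implicit Arguments. Unset Strict Implicit. Unset Printing Implicit Defensive.
Import GRing.Theory.
Local Open Scope ring_scope.

(* Vertices are the indices 'I_n, identified with the variables x_1..x_n of
   S = K[x_1..x_n] = {mpoly K[n]}. *)

Definition is_clutter (n : nat) (V : {set 'I_n}) (E : {set {set 'I_n}}) : Prop :=
  (forall e, e \in E -> e \subset V) /\
  (forall e f, e \in E -> f \in E -> e \subset f -> e = f).

Definition two_collage (n : nat) (V : {set 'I_n}) (E : {set {set 'I_n}})
    (C : {set {set 'I_n}}) : Prop :=
  C \subset E /\
  forall e, e \in E -> exists2 v, v \in V & exists2 f, f \in C & e :\ v \subset f.

Definition sqmono (K : fieldType) (n : nat) (A : {set 'I_n}) : {mpoly K[n]} :=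
  \prod_(i in A) 'X_i.

Definition in_edge_ideal (K : fieldType) (n : nat) (E : {set {set 'I_n}})
    (g : {mpoly K[n]}) : Prop :=
  exists h : {set 'I_n} -> {mpoly K[n]}, g = \sum_(e in E) h e * sqmono K e.

Definition in_subring (K : fieldType) (n : nat) (Z : {set 'I_n})
    (q : {mpoly K[n]}) : Prop :=
  forall m, m \in msupp q -> forall i : 'I_n, i \notin Z -> m i = 0%N.

(* A squarefree Stanley decomposition of S/I(E): a finite family of pairs
   (U_i, Z_i) with U_i \subset Z_i (u_i = prod_{x in U_i} x), such that
   S/I = (+)_i u_i K[Z_i] as K-vector spaces with each u_i K[Z_i] free over
   K[Z_i].  Independence (directness + freeness): if such a sum lies in
   I, all q_i vanish. *)
Definition stanley_decomposition (K : fieldType) (n : nat)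
    (E : {set {set 'I_n}}) (D : seq ({set 'I_n} * {set 'I_n})) : Prop :=
  [/\ (forall p, p \in D -> p.1 \subset p.2),
      (forall f : {mpoly K[n]}, exists2 q : 'I_(size D) -> {mpoly K[n]},
          (forall i : 'I_(size D), in_subring (nth (set0, set0) D i).2 (q i)) &
          in_edge_ideal E (f - \sum_(i < size D) sqmono K (nth (set0, set0) D i).1 * q i))
    & (forall q : 'I_(size D) -> {mpoly K[n]},
          (forall i : 'I_(size D), in_subring (nth (set0, set0) D i).2 (q i)) ->
          in_edge_ideal E (\sum_(i < size D) sqmono K (nth (set0, set0) D i).1 * q i) ->
          forall i : 'I_(size D), q i = 0)].

Definition stanley_reg (n : nat) (D : seq ({set 'I_n} * {set 'I_n})) : nat :=
  \max_(p <- D) #|p.1|.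

Definition sreg_le (K : fieldType) (n : nat) (E : {set {set 'I_n}}) (k : nat) : Prop :=
  exists2 D, stanley_decomposition K E D & (stanley_reg D <= k)%N.

From mathcomp Require Import all_boot all_order all_algebra.
From mathcomp Require Import mpoly.

(* Since a polynomial lies in I(C) exactly when each of its monomials has an
   edge inside its support, the standard monomials (no edge in the support)
   form a basis of S/I(C), and any family of cones u_U K[Z] partitioning them
   is a Stanley decomposition.  A standard monomial is sorted by its trace
   T = supp :&: e1, a proper subset of e1, into the cone x_T K[T :|: W_T],
   where W_T are the vertices outside e1 that can join T without creating an
   edge.  The 2-collage {e1} makes every monomial of such a cone standard: an
   edge e with e :\ v <= e1 inside the support lies in v |: T, and v is then
   in T or in W_T. *)

Set Implicit Arguments. Unset Strict Implicit. Unset Printing Implicit Defensive.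
Import GRing.Theory.
Local Open Scope ring_scope.

Section MonomialSupport.

Variable n : nat.

Definition mnm_supp (M : 'X_{1..n}) : {set 'I_n} := [set i | M i != 0%N].

Definition mnm_of_set (A : {set 'I_n}) : 'X_{1..n} := (\sum_(i in A) U_(i))%MM.

Lemma mnm_of_setE A i : mnm_of_set A i = (i \in A).
Proof.
rewrite /mnm_of_set mnm_sumE (eq_bigr (fun j => nat_of_bool (j == i))); last first.
  by move=> j _; rewrite mnm1E.
case: (boolP (i \in A)) => iA.
  by rewrite (bigD1 i) //= eqxx big1 // => j /andP[_ /negbTE ->].
by rewrite big1 // => j jA; case: eqP => // ji; rewrite -ji jA in iA.
Qed.

Lemma mnm_supp_of_set A : mnm_supp (mnm_of_set A) = A.
Proof. by apply/setP => i; rewrite inE mnm_of_setE; case: (i \in A). Qed.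

Lemma mnm_suppD M M' : mnm_supp (M + M')%MM = mnm_supp M :|: mnm_supp M'.
Proof. by apply/setP => i; rewrite !inE mnmDE addn_eq0 negb_and. Qed.

Lemma lep_mnm_of_set A M : (mnm_of_set A <= M)%MM = (A \subset mnm_supp M).
Proof.
apply/mnm_lepP/subsetP => [le_AM i iA | sAM i].
  by have := le_AM i; rewrite mnm_of_setE iA inE lt0n.
by rewrite mnm_of_setE; case: (boolP (i \in A)) => // /sAM; rewrite inE lt0n.
Qed.

End MonomialSupport.

Lemma sqmonoE (K : fieldType) n (A : {set 'I_n}) : sqmono K A = 'X_[mnm_of_set A].
Proof. by rewrite /sqmono /mnm_of_set (big_morph _ (@mpolyXD n K) (@mpolyX0 n K)). Qed.

Section EdgeIdeal.

Variables (K : fieldType) (n : nat) (E : {set {set 'I_n}}).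

Definition independent (A : {set 'I_n}) : bool := [forall e in E, ~~ (e \subset A)].

Lemma independentS (A B : {set 'I_n}) : A \subset B -> independent B -> independent A.
Proof.
move=> sAB /forall_inP indB; apply/forall_inP => e eE.
by apply: contra (indB e eE) => /subset_trans; apply.
Qed.

Lemma in_edge_ideal0 : in_edge_ideal E (0 : {mpoly K[n]}).
Proof. by exists (fun _ => 0); rewrite big1 // => e _; rewrite mul0r. Qed.

Lemma in_edge_idealD (g h : {mpoly K[n]}) :
  in_edge_ideal E g -> in_edge_ideal E h -> in_edge_ideal E (g + h).
Proof.
move=> [a ->] [b ->]; exists (fun e => a e + b e).
by rewrite -big_split; apply: eq_bigr => e _; rewrite mulrDl.
Qed.

Lemma in_edge_idealX (c : K) M :
  ~~ independent (mnm_supp M) -> in_edge_ideal E (c *: 'X_[M]).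
Proof.
case/forall_inPn => e eE /negPn le_eM.
exists (fun e' => if e' == e then c *: 'X_[M - mnm_of_set e] else 0).
rewrite (bigD1 e) //= eqxx big1 => [|e' /andP[_ /negbTE ->]]; last by rewrite mul0r.
by rewrite addr0 sqmonoE -scalerAl -mpolyXD submK // lep_mnm_of_set.
Qed.

Lemma msupp_edge_ideal (g : {mpoly K[n]}) M :
  in_edge_ideal E g -> M \in msupp g -> ~~ independent (mnm_supp M).
Proof.
move=> [a ->]; apply: contraTN => indM.
rewrite mcoeff_msupp negbK raddf_sum big1 // => e eE.
apply: memN_msupp_eq0; apply: contraNN (forall_inP indM e eE).
rewrite sqmonoE (perm_mem (msuppMX _ _)) => /mapP[M' _ ->].
by rewrite mnm_suppD mnm_supp_of_set subsetUl.
Qed.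

End EdgeIdeal.

Section Subring.

Variables (K : fieldType) (n : nat) (Z : {set 'I_n}).

Lemma in_subring0 : in_subring Z (0 : {mpoly K[n]}).
Proof. by move=> M; rewrite msupp0. Qed.

Lemma in_subringD (p q : {mpoly K[n]}) :
  in_subring Z p -> in_subring Z q -> in_subring Z (p + q).
Proof.
move=> Zp Zq M; rewrite mcoeff_msupp mcoeffD.
case: (boolP (M \in msupp p)) => [/Zp //|/memN_msupp_eq0 ->].
by rewrite add0r -mcoeff_msupp => /Zq.
Qed.

Lemma in_subringX (c : K) M : mnm_supp M \subset Z -> in_subring Z (c *: 'X_[M]).
Proof.
move=> sMZ M'; rewrite mcoeff_msupp mcoeffZ mcoeffX.
case: (eqVneq M M') => [<- _ i iZ | _]; last by rewrite mulr0 eqxx.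
by apply/eqP; apply: contraNT iZ => Mi; apply: (subsetP sMZ); rewrite inE.
Qed.

Lemma msupp_sqmonoM U (q : {mpoly K[n]}) M :
  in_subring Z q -> M \in msupp (sqmono K U * q) ->
  U \subset mnm_supp M /\ mnm_supp M \subset U :|: Z.
Proof.
move=> Zq; rewrite mulrC sqmonoE (perm_mem (msuppMX _ _)) => /mapP[M' M'q ->].
rewrite mnm_suppD mnm_supp_of_set subsetUl; split=> //; apply: setUS.
by apply/subsetP => i; rewrite inE; apply: contraR => /(Zq _ M'q) ->.
Qed.

End Subring.

Definition in_cone n (p : {set 'I_n} * {set 'I_n}) (M : 'X_{1..n}) : bool :=
  (p.1 \subset mnm_supp M) && (mnm_supp M \subset p.2).

Section StanleyCriterion.

Variables (K : fieldType) (n : nat) (E : {set {set 'I_n}}).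
Variable D : seq ({set 'I_n} * {set 'I_n}).

Hypothesis D_uniq : uniq D.
Hypothesis D_sub : forall p, p \in D -> p.1 \subset p.2.
Hypothesis D_cover :
  forall M, independent E (mnm_supp M) -> exists2 p, p \in D & in_cone p M.
Hypothesis D_indep :
  forall p M, p \in D -> in_cone p M -> independent E (mnm_supp M).
Hypothesis D_disjoint :
  forall p p' M, p \in D -> p' \in D -> in_cone p M -> in_cone p' M -> p = p'.

Local Notation D_ i := (nth (set0, set0) D i).

Lemma in_cone_sqmonoM (i : 'I_(size D)) (q : {mpoly K[n]}) M :
  in_subring (D_ i).2 q -> M \in msupp (sqmono K (D_ i).1 * q) -> in_cone (D_ i) M.
Proof.
move=> Zq /(msupp_sqmonoM Zq) [sUM sMUZ]; rewrite /in_cone sUM.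
by rewrite (subset_trans sMUZ) // subUset subxx D_sub // mem_nth.
Qed.

Lemma stanley_span_monomial (c : K) M :
  exists2 q : 'I_(size D) -> {mpoly K[n]},
    (forall i : 'I_(size D), in_subring (D_ i).2 (q i)) &
    in_edge_ideal E (c *: 'X_[M] - \sum_(i < size D) sqmono K (D_ i).1 * q i).
Proof.
have [indM | /in_edge_idealX ideal_cM] := boolP (independent E (mnm_supp M)); last first.
  exists (fun _ => 0) => [i|]; first exact: in_subring0.
  by rewrite big1 ?subr0 // => i _; rewrite mulr0.
have [p pD coneM] := D_cover indM; move: coneM; rewrite /in_cone => /andP[sUM sMZ].
have iD : (index p D < size D)%N by rewrite index_mem.
pose i0 := Ordinal iD; have Di0 : D_ i0 = p by rewrite nth_index.
exists (fun i => if i == i0 then c *: 'X_[M - mnm_of_set p.1] else 0) => [i|].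
  case: eqP => [-> | _]; last exact: in_subring0.
  rewrite Di0; apply: in_subringX; apply: subset_trans sMZ; apply/subsetP => j.
  by rewrite !inE mnmBE; apply: contraNN => /eqP ->.
rewrite (bigD1 i0) //= eqxx big1 => [|i /negbTE ->]; last by rewrite mulr0.
rewrite addr0 Di0 sqmonoE -scalerAr -mpolyXD addmC submK ?lep_mnm_of_set // subrr.
exact: in_edge_ideal0.
Qed.

Lemma stanley_span (f : {mpoly K[n]}) :
  exists2 q : 'I_(size D) -> {mpoly K[n]},
    (forall i : 'I_(size D), in_subring (D_ i).2 (q i)) &
    in_edge_ideal E (f - \sum_(i < size D) sqmono K (D_ i).1 * q i).
Proof.
rewrite (mpolyE f); elim: (msupp f) => [|M s [q Zq Iq]].
  exists (fun _ => 0) => [i|]; first exact: in_subring0.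
  by rewrite big_nil big1 ?subr0 => [|i _]; [exact: in_edge_ideal0 | rewrite mulr0].
have [q' Zq' Iq'] := stanley_span_monomial f@_M M.
exists (fun i => q' i + q i) => [i|]; first exact: in_subringD.
rewrite big_cons (eq_bigr _ (fun i _ => mulrDr _ _ _)) big_split /= opprD addrACA.
exact: in_edge_idealD.
Qed.

Lemma stanley_free (q : 'I_(size D) -> {mpoly K[n]}) :
  (forall i : 'I_(size D), in_subring (D_ i).2 (q i)) ->
  in_edge_ideal E (\sum_(i < size D) sqmono K (D_ i).1 * q i) ->
  forall i, q i = 0.
Proof.
move=> Zq Isum i.
have uq0 : sqmono K (D_ i).1 * q i = 0.
  apply/mpolyP => M; rewrite mcoeff0; apply: memN_msupp_eq0; apply/negP => Mi.
  have coneM := in_cone_sqmonoM (Zq i) Mi.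
  suff /(msupp_edge_ideal Isum) /negP[] :
      M \in msupp (\sum_(j < size D) sqmono K (D_ j).1 * q j).
    by apply: D_indep coneM; rewrite mem_nth.
  rewrite mcoeff_msupp raddf_sum (bigD1 i) //= big1 ?addr0 -?mcoeff_msupp //.
  move=> j ji; apply: memN_msupp_eq0.
  apply: contra ji => /(in_cone_sqmonoM (Zq j)) coneMj.
  apply/eqP/val_inj/eqP; rewrite -(nth_uniq (set0, set0) _ _ D_uniq) ?ltn_ord //.
  by apply/eqP/(D_disjoint _ _ coneMj coneM); rewrite mem_nth.
apply/mpolyP => M; have := congr1 (mcoeff (mnm_of_set (D_ i).1 + M)) uq0.
by rewrite mulrC sqmonoE mcoeffMX !mcoeff0.
Qed.

Lemma stanley_decomposition_of_cones : stanley_decomposition K E D.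
Proof. by split; [move=> p /D_sub | exact: stanley_span | exact: stanley_free]. Qed.

End StanleyCriterion.

Section OneEdgeCollage.

Variables (n : nat) (E : {set {set 'I_n}}) (e1 : {set 'I_n}).

Definition indep_subsets : {set {set 'I_n}} :=
  [set T : {set 'I_n} | (T \subset e1) && independent E T].

Definition free_vars (T : {set 'I_n}) : {set 'I_n} :=
  [set v | (v \notin e1) && independent E (v |: T)].

Definition collage_cone (T : {set 'I_n}) : {set 'I_n} * {set 'I_n} :=
  (T, T :|: free_vars T).

Definition collage_stanley : seq ({set 'I_n} * {set 'I_n}) :=
  [seq collage_cone T | T <- enum indep_subsets].

Lemma in_collage_cone_meet (T : {set 'I_n}) M :
  T \subset e1 -> in_cone (collage_cone T) M -> mnm_supp M :&: e1 = T.
Proof.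
move=> sTe1 /andP[/= sTM sMZ]; apply/setP => i; rewrite inE.
apply/andP/idP => [[iM ie1] | iT]; last by rewrite (subsetP sTM) ?(subsetP sTe1).
by have := subsetP sMZ i iM; rewrite !inE ie1 /= orbF.
Qed.

Lemma collage_cone_cover M :
  independent E (mnm_supp M) ->
  mnm_supp M :&: e1 \in indep_subsets /\ in_cone (collage_cone (mnm_supp M :&: e1)) M.
Proof.
move=> indM; split; first by rewrite inE subsetIr (independentS (subsetIl _ _) indM).
rewrite /in_cone /= subsetIl; apply/subsetP => i iM; rewrite in_setU in_setI iM /=.
case: (boolP (i \in e1)) => //= ie1; rewrite inE ie1; apply: independentS indM.
by rewrite subUset sub1set iM subsetIl.
Qed.

Lemma indep_subset_card (T : {set 'I_n}) :
  e1 \in E -> T \in indep_subsets -> (#|T| <= #|e1| - 1)%N.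
Proof.
move=> e1E; rewrite inE => /andP[sTe1 /forall_inP/(_ e1 e1E) ne1T].
have /proper_card : T \proper e1 by rewrite properE sTe1.
by case: #|e1| => // k; rewrite subSS subn0.
Qed.

Lemma collage_stanley_uniq : uniq collage_stanley.
Proof. by rewrite map_inj_uniq ?enum_uniq // => T T' /(congr1 fst). Qed.

Lemma collage_stanley_disjoint p p' M :
  p \in collage_stanley -> p' \in collage_stanley ->
  in_cone p M -> in_cone p' M -> p = p'.
Proof.
move=> /mapP[T]; rewrite mem_enum inE => /andP[sTe1 _] -> /mapP[T'].
rewrite mem_enum inE => /andP[sT'e1 _] -> /(in_collage_cone_meet sTe1) <-.
by move/(in_collage_cone_meet sT'e1) <-.
Qed.

Hypothesis e1_collage : forall e, e \in E -> exists v, e :\ v \subset e1.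

Lemma collage_cone_indep (T : {set 'I_n}) M :
  T \in indep_subsets -> in_cone (collage_cone T) M -> independent E (mnm_supp M).
Proof.
rewrite inE => /andP[sTe1 /forall_inP indT] coneM.
have meetT := in_collage_cone_meet sTe1 coneM; case/andP: coneM => _ /= sMZ.
apply/forall_inP => e eE; apply/negP => seM; have [v sev] := e1_collage eE.
have seVT : e \subset v |: T.
  apply/subsetP => i ie; rewrite !inE; case: eqVneq => //= iv.
  by rewrite -meetT inE (subsetP seM) // (subsetP sev) // !inE iv.
have [vW | vW] := boolP (v \in free_vars T).
  by move: vW; rewrite inE => /andP[_ /forall_inP/(_ e eE)]; rewrite seVT.
move/negP: (indT e eE); apply; apply/subsetP => i ie; move: (subsetP seVT i ie).
rewrite !inE => /orP[/eqP iv | //]; have := subsetP sMZ i (subsetP seM i ie).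
by rewrite in_setU iv (negbTE vW) orbF.
Qed.

Lemma collage_stanley_decomposition (K : fieldType) :
  stanley_decomposition K E collage_stanley.
Proof.
apply: stanley_decomposition_of_cones.
- exact: collage_stanley_uniq.
- by move=> p /mapP[T _ ->]; apply: subsetUl.
- move=> M /collage_cone_cover[TD coneM].
  by exists (collage_cone (mnm_supp M :&: e1)); rewrite // map_f ?mem_enum.
- by move=> p M /mapP[T]; rewrite mem_enum => TD ->; apply: collage_cone_indep.
- exact: collage_stanley_disjoint.
Qed.

End OneEdgeCollage.

Theorem lemma5p15 (K : fieldType) (n : nat) (V : {set 'I_n})
    (E : {set {set 'I_n}}) (e1 : {set 'I_n}) :
  is_clutter V E -> e1 \in E -> two_collage V E [set e1] ->
  sreg_le K E (#|e1| - 1).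
Proof.
move=> _ e1E [_ collage].
have e1_collage e : e \in E -> exists v, e :\ v \subset e1.
  by case/collage => v _ [f /set1P -> sevf]; exists v.
exists (collage_stanley E e1); first exact: collage_stanley_decomposition.
rewrite /stanley_reg big_map big_enum /=; apply/bigmax_leqP => T.
exact: indep_subset_card.
Qed.
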